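(* Let $q$ be a power of $2$ and $f(X)=X(X^{q-1}-c)^{q+1}$ on $\mathbb{F}_{q^2}$, with $a,\beta,g,L_{[u:v]},\mathbb{P}^1$ as in the context. If $c\in\mathbb{F}_q\setminus\{0,1\}$, then $\mathcal{G}(f)$ is isomorphic to \[ \mathcal{C}_1\oplus\bigoplus_{L_{[u:v]}\in\mathbb{P}^1}\frac{q-1}{\operatorname{ord}(g(u,v))}\times\mathcal{C}_{\operatorname{ord}(g(u,v))}. \] If $c=1$, then $\mathcal{G}(f)$ is isomorphic to \[ (\mathcal{C}_1,\mathcal{T}_{q-1})\oplus\bigoplus_{L_{[u:v]}\in\mathbb{P}^1\setminus\{L_{[1:0]}\}}\frac{q-1}{\operatorname{ord}(g(u,v))}\times\mathcal{C}_{\operatorname{ord}(g(u,v))}. \]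
   Context: $a\in\mathbb{F}_q$ with $\operatorname{Tr}(a)=1$ (absolute trace to $\mathbb{F}_2$), $\beta\in\mathbb{F}_{q^2}$ with $\beta^2+\beta+a=0$; every element of $\mathbb{F}_{q^2}$ is uniquely $x+y\beta$, $x,y\in\mathbb{F}_q$. For $(x,y)\neq(0,0)$, $g(x,y)=c^2+1+\frac{cy^2}{x^2+xy+y^2a}\in\mathbb{F}_q$, invariant under scaling by $\mathbb{F}_q^*$. For $(u,v)\neq(0,0)$, $L_{[u:v]}=\{\lambda(u+v\beta):\lambda\in\mathbb{F}_q\}$, $\mathbb{P}^1$ is the set of these $q+1$ lines, and $\operatorname{ord}$ is multiplicative order in $\mathbb{F}_q^*$. $\mathcal{G}(f)$ is the functional graph (vertices $\mathbb{F}_{q^2}$, edges $\langle x,f(x)\rangle$). Graph notation: $\mathcal{C}_n$ is an oriented cycle of length $n$; $\mathcal{T}_m$ is the directed tree with $m+1$ vertices $P_1,\dots,P_{m+1}$ and edges $P_i\to P_{m+1}$ for $1\le i\le m$; $(\mathcal{C}_n,\mathcal{T}_m)$ is the graph obtained by replacing each vertex of $\mathcal{C}_n$ by a copy of $\mathcal{T}_m$ (identifying the cycle vertex with the root $P_{m+1}$); $\mathcal{G}\oplus\mathcal{H}$ is disjoint union; $k\times\mathcal{H}$ is the disjoint union of $k$ copies of $\mathcal{H}$. *)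

From HB Require Import structures.
From mathcomp Require Import all_boot all_order all_algebra all_field.
Set Implicit Arguments. Unset Strict Implicit. Unset Printing Implicit Defensive.
Import GRing.Theory.
Local Open Scope ring_scope.

(* A component descriptor (n, m) stands for the graph (C_n, T_m):
   vertices (i, j) with i < n, j <= m; the root of the i-th tree is (i, m);
   leaves (i, j), j < m, point to (i, m); roots form the oriented cycle
   (i, m) -> ((i+1) mod n, m).  C_n itself is (C_n, T_0).
   A list s of descriptors stands for the disjoint union of its components;
   vertices are triples (k, i, j) with k < size s. *)
Definition comp_vert (s : seq (nat * nat)) (v : nat * nat * nat) : bool :=
  let: (k, i, j) := v in
  [&& (k < size s)%N, (i < (nth (1, 0) s k).1)%N & (j <= (nth (1, 0) s k).2)%N].

Definition comp_next (s : seq (nat * nat)) (v : nat * nat * nat) : nat * nat * nat :=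
  let: (k, i, j) := v in
  let: (n, m) := nth (1%N, 0%N) s k in
  if (j < m)%N then (k, i, m) else (k, (i.+1 %% n)%N, m).

Definition fgraph_iso (T : finType) (f : T -> T) (s : seq (nat * nat)) : Prop :=
  exists phi : T -> nat * nat * nat,
    [/\ injective phi,
        forall x, comp_vert s (phi x),
        forall v, comp_vert s v -> exists x, phi x = v
      & forall x y, (y == f x) = (phi y == comp_next s (phi x))].

Definition copies_cycle (k n : nat) : seq (nat * nat) := nseq k (n, 0%N).

Section FieldDefs.
Variable L : finFieldType.

Definition subFq (q : nat) : pred L := fun x => x ^+ q == x.

Definition absTr (k : nat) (a : L) : L := \sum_(i < k) a ^+ (2 ^ i).

Definition gfun (a c x y : L) : L :=
  c ^+ 2 + 1 + c * y ^+ 2 / (x ^+ 2 + x * y + y ^+ 2 * a).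

Definition mord (x : L) : nat := fingraph.order (fun y : L => x * y) 1.

Definition lineset (q : nat) (beta u v : L) : pred L :=
  fun z => [exists lam : L, (lam \in subFq q) && (z == lam * (u + v * beta))].

Definition P1_reps (q : nat) (beta : L) (reps : seq (L * L)) : Prop :=
  (forall r, r \in reps -> [/\ r.1 \in subFq q, r.2 \in subFq q & r != (0, 0)])
  /\ (forall z : L, z != 0 -> count (fun r => lineset q beta r.1 r.2 z) reps = 1%N).

End FieldDefs.

From HB Require Import structures.
From mathcomp Require Import all_boot all_order all_algebra all_field.
From mathcomp Require Import all_fingroup all_solvable.
From mathcomp Require Import zify ring.
Set Implicit Arguments. Unset Strict Implicit. Unset Printing Implicit Defensive.
Import GRing.Theory FinRing.Theory.
Local Open Scope ring_scope.

(* f_c(x) = x g_c(x) with g_c(x) = (x^(q-1) - c)^(q+1), the norm of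
   x^(q-1) - c; so g_c(x) lies in F_q, and g_c(l x) = g_c(x) for l in F_q^*
   because l^(q-1) = 1.  Hence f_c maps every punctured line F_q^* (u + v beta) to
   itself by multiplication with the constant g_c(u + v beta), which in
   characteristic 2 equals g(u, v); when it is nonzero, the q - 1 points of the
   line split into cycles of length ord g(u, v).  The constant vanishes only if
   c = 1 and u + v beta lies in F_q (Tr(a) = 1 makes beta^q = beta + 1, so this
   is the line L_[1:0] = F_q): f_1 sends all of F_q to 0, giving (C_1, T_(q-1)),
   while for c <> 1 only the fixed point 0 remains. *)

(** * Functional graphs *)

Section FunctionalGraphs.
Variables (T : finType) (f : T -> T).

Definition fgraph_iso_on (D : pred T) (s : seq (nat * nat)) : Prop :=
  exists phi : T -> nat * nat * nat,
    [/\ {in D &, injective phi},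
        forall x, x \in D -> comp_vert s (phi x),
        forall v, comp_vert s v -> exists2 x, x \in D & phi x = v,
        {homo f : x / x \in D}
      & forall x, x \in D -> phi (f x) = comp_next s (phi x)].

Lemma eq_fgraph_iso_on D1 D2 s : D1 =i D2 -> fgraph_iso_on D1 s -> fgraph_iso_on D2 s.
Proof.
move=> E [phi [inj cv sur cl nx]]; exists phi; split.
- by move=> x y; rewrite -!E; apply: inj.
- by move=> x; rewrite -E; apply: cv.
- by move=> v /sur [x]; rewrite E => ??; exists x.
- by move=> x; rewrite -!E; apply: cl.
- by move=> x; rewrite -E; apply: nx.
Qed.

Lemma fgraph_iso_onT s : fgraph_iso_on predT s -> fgraph_iso f s.
Proof.
move=> [phi [inj cv sur _ nx]]; exists phi; split.
- by move=> x y; apply: inj.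
- by move=> x; apply: cv.
- by move=> v /sur [x _ <-]; exists x.
- by move=> x y; rewrite -nx //; apply/eqP/eqP => [->|/inj->].
Qed.

Definition shift_comp (n : nat) (v : nat * nat * nat) := ((v.1.1 + n)%N, v.1.2, v.2).
Definition unshift_comp (n : nat) (v : nat * nat * nat) := ((v.1.1 - n)%N, v.1.2, v.2).

Lemma shift_compK n : cancel (shift_comp n) (unshift_comp n).
Proof. by case=> [[k i] j]; rewrite /unshift_comp /= addnK. Qed.

Lemma shift_comp_ge n v : ~~ ((shift_comp n v).1.1 < n)%N.
Proof. by rewrite -leqNgt leq_addl. Qed.

Lemma comp_vert_cat s1 s2 v :
  comp_vert (s1 ++ s2) v =
  if (v.1.1 < size s1)%N then comp_vert s1 v
  else comp_vert s2 (unshift_comp (size s1) v).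
Proof.
case: v => [[k i] j] /=; rewrite size_cat nth_cat.
case: ifP => h; first by rewrite (leq_trans h) // leq_addr.
by congr (_ && _); apply/idP/idP => H; lia.
Qed.

Lemma comp_next_cat s1 s2 v :
  comp_next (s1 ++ s2) v =
  if (v.1.1 < size s1)%N then comp_next s1 v
  else shift_comp (size s1) (comp_next s2 (unshift_comp (size s1) v)).
Proof.
case: v => [[k i] j] /=; rewrite nth_cat; case: ifP => // h.
by case: (nth _ s2 _) => n m /=; case: ifP; rewrite /shift_comp /= subnK // leqNgt h.
Qed.

Lemma fgraph_iso_on0 : fgraph_iso_on pred0 [::].
Proof. by exists (fun _ => (0, 0, 0)%N); split => // -[[]]. Qed.

Lemma fgraph_iso_on_cat D1 D2 s1 s2 :
  (forall x, x \in D1 -> x \in D2 -> False) ->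
  fgraph_iso_on D1 s1 -> fgraph_iso_on D2 s2 ->
  fgraph_iso_on [predU D1 & D2] (s1 ++ s2).
Proof.
move=> dis [p1 [i1 c1 s1s cl1 n1]] [p2 [i2 c2 s2s cl2 n2]].
set n := size s1.
have lt1 x : x \in D1 -> ((p1 x).1.1 < n)%N.
  by move/c1; case: (p1 x) => [[? ?] ?] /and3P [].
pose p x := if x \in D1 then p1 x else shift_comp n (p2 x).
have pD1 x : x \in D1 -> p x = p1 x by rewrite /p => ->.
have pD2 x : x \in D2 -> p x = shift_comp n (p2 x).
  by rewrite /p; case: ifP => // x1 /(dis _ x1).
exists p; split.
- move=> x y /orP [x1|x2] /orP [y1|y2].
  + by rewrite !pD1 //; apply: i1.
  + rewrite pD1 // pD2 // => e.
    by move: (lt1 x x1); rewrite e (negbTE (shift_comp_ge _ _)).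
  + rewrite pD2 // pD1 // => e.
    by move: (lt1 y y1); rewrite -e (negbTE (shift_comp_ge _ _)).
  + by rewrite !pD2 // => /(congr1 (unshift_comp n)); rewrite !shift_compK; apply: i2.
- move=> x /orP [x1|x2].
  + by rewrite pD1 // comp_vert_cat lt1 //; apply: c1.
  + by rewrite pD2 // comp_vert_cat (negbTE (shift_comp_ge _ _)) shift_compK; apply: c2.
- move=> v; rewrite comp_vert_cat; case: ifP => hv.
  + by move=> /s1s [x x1 <-]; exists x; rewrite ?inE ?x1 ?pD1.
  + move=> /s2s [x x2 e]; exists x; first by rewrite inE x2 orbT.
    rewrite pD2 // e; case: v hv {e} => [[k i] j] /= hv.
    by rewrite /shift_comp /= subnK // leqNgt hv.
- by move=> x /orP [/cl1 | /cl2]; rewrite inE => ->; rewrite ?orbT.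
- move=> x /orP [x1|x2].
  + by rewrite !pD1 ?cl1 // n1 // comp_next_cat lt1.
  + rewrite !pD2 ?cl2 // n2 // comp_next_cat (negbTE (shift_comp_ge _ _)).
    by rewrite shift_compK.
Qed.

Lemma fgraph_iso_on_flatten (I : eqType) (D : I -> pred T) (s : I -> seq (nat * nat))
    (xs : seq I) :
  (forall i, i \in xs -> fgraph_iso_on (D i) (s i)) ->
  (forall x, (count (fun i => x \in D i) xs <= 1)%N) ->
  fgraph_iso_on [pred x | has (fun i => x \in D i) xs] (flatten (map s xs)).
Proof.
elim: xs => [|i xs IH] H C /=.
  by apply: eq_fgraph_iso_on fgraph_iso_on0 => x; rewrite !inE.
have Hi : fgraph_iso_on (D i) (s i) by apply: H; rewrite inE eqxx.
have Hxs : fgraph_iso_on [pred x | has (fun i => x \in D i) xs] (flatten (map s xs)).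
  apply: IH => [j hj|x]; first by apply: H; rewrite inE hj orbT.
  by have := C x => /=; case: (x \in D i) => //= h; apply: leq_trans h.
apply: eq_fgraph_iso_on (fgraph_iso_on_cat _ Hi Hxs) => [x|x h1]; first by rewrite !inE.
by rewrite inE has_count => h2; have := C x; rewrite /= h1 /=; lia.
Qed.

Section Cycles.
Variables (D : pred T) (d : nat).
Hypotheses (d_gt0 : (0 < d)%N) (fD : {homo f : x / x \in D}).
Hypothesis iter_period : forall x, x \in D -> iter d f x = x.
Hypothesis iter_aperiodic : forall i x, x \in D -> (0 < i < d)%N -> iter i f x != x.

Lemma iter_homo x : x \in D -> forall n, iter n f x \in D.
Proof. by move=> xD; elim=> //= n IH; apply: fD. Qed.

Lemma uniq_traject_period x : x \in D -> uniq (traject f x d).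
Proof.
move=> xD; apply/(uniqP x) => i j; rewrite !inE size_traject => hi hj.
rewrite !nth_traject //.
wlog lij : i j hi hj / (i <= j)%N.
  by move=> W; case: (leqP i j) => [|/ltnW] h e; [|apply/esym]; apply: W.
move=> e; apply/eqP; rewrite eqn_leq lij leqNgt; apply/negP => lt.
have := iter_aperiodic (i := (j - i)%N) (iter_homo xD i).
rewrite subn_gt0 lt (leq_ltn_trans (leq_subr _ _) hj) -iterD subnK ?(ltnW lt) //.
by rewrite e eqxx => /(_ isT).
Qed.

Lemma traject_period_homo x : x \in D -> {homo f : y / y \in traject f x d}.
Proof.
move=> xD y /trajectP [i _ ->]; rewrite -iterS.
have : looping f x d by rewrite /looping iter_period // -(prednK d_gt0) mem_head.
by move/loopingP.
Qed.

Lemma fgraph_iso_on_orbit x : x \in D ->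
  fgraph_iso_on [pred y | y \in traject f x d] [:: (d, 0%N)].
Proof.
move=> xD; have hu := uniq_traject_period xD.
exists (fun y => (0%N, index y (traject f x d), 0%N)); split.
- move=> y1 y2 h1 h2 [] e.
  by rewrite -(nth_index x h1) -(nth_index x h2) e.
- by move=> y; rewrite inE /= -index_mem size_traject => ->.
- move=> [[k i] j] /and3P [/=]; rewrite ltnS leqn0 => /eqP -> hi /=.
  rewrite leqn0 => /eqP ->; exists (iter i f x).
    by rewrite inE -(nth_traject _ hi) mem_nth ?size_traject.
  by rewrite -(nth_traject _ hi) index_uniq ?size_traject.
- exact: traject_period_homo.
- move=> y; rewrite inE => /trajectP [i hi ->] /=.
  rewrite -(nth_traject _ hi) index_uniq ?size_traject // nth_traject // -iterS.
  case: (ltnP i.+1 d) => h.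
    by rewrite -(nth_traject _ h) index_uniq ?size_traject // modn_small.
  have -> : i.+1 = d by apply/eqP; rewrite eqn_leq h hi.
  by rewrite iter_period // modnn; case: d d_gt0 => //= ? _; rewrite eqxx.
Qed.

End Cycles.

Lemma fgraph_iso_on_cycles (D : pred T) d : (0 < d)%N ->
  {homo f : x / x \in D} -> (forall x, x \in D -> iter d f x = x) ->
  (forall i x, x \in D -> (0 < i < d)%N -> iter i f x != x) ->
  fgraph_iso_on D (nseq (#|D| %/ d) (d, 0%N)).
Proof.
move=> d_gt0; have [n] := ubnP #|D|; elim: n D => // n IH D lt_D_n fD hd hp.
case: (pickP D) => [x xD|D0]; last first.
  rewrite (eq_card0 D0) div0n; apply: eq_fgraph_iso_on fgraph_iso_on0 => y.
  by rewrite !inE; move: (D0 y); rewrite unfold_in => ->.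
pose O := [pred y | y \in traject f x d].
pose D' := [pred y | (y \in D) && (y \notin O)].
have OD : {subset O <= D} by move=> y /trajectP [i _ ->]; exact: iter_homo.
have cO : #|O| = d by rewrite (card_uniqP (uniq_traject_period fD hp xD)) size_traject.
have cD : #|D| = (d + #|D'|)%N.
  rewrite -(cardID O D) -cO; congr (_ + _)%N; apply: eq_card => y; rewrite !inE.
    by apply/andP/idP => [[]|yO] //; rewrite OD.
  by rewrite andbC.
have fD' : {homo f : y / y \in D'}.
  move=> y /andP [yD yO]; rewrite inE fD //=; apply: contra yO => fyO.
  rewrite -(hd y yD) -(prednK d_gt0) iterSr.
  have O_homo := traject_period_homo d_gt0 hd xD.
  exact: (iter_homo (D := fun z => z \in traject f x d) O_homo fyO d.-1).
have iso' : fgraph_iso_on D' (nseq (#|D'| %/ d) (d, 0%N)).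
  apply: IH => //.
  - move: lt_D_n; rewrite cD -(prednK d_gt0) addSn ltnS.
    by apply: leq_ltn_trans; rewrite leq_addl.
  - by move=> y /andP [yD _]; apply: hd.
  - by move=> i y /andP [yD _]; apply: hp.
rewrite cD divnDl // divnn d_gt0 add1n.
have isoO := fgraph_iso_on_orbit d_gt0 fD hd hp xD.
apply: eq_fgraph_iso_on (fgraph_iso_on_cat _ isoO iso') => [y|y yO].
  by rewrite !inE; case: (boolP (y \in O)) => [/OD ->|_]; rewrite ?andbT.
by rewrite inE yO andbF.
Qed.

Lemma fgraph_iso_split D1 D2 s1 s2 : (forall x, (x \in D1) != (x \in D2)) ->
  fgraph_iso_on D1 s1 -> fgraph_iso_on D2 s2 -> fgraph_iso f (s1 ++ s2).
Proof.
move=> D12 iso1 iso2; apply: fgraph_iso_onT.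
apply: eq_fgraph_iso_on (fgraph_iso_on_cat _ iso1 iso2) => [x|x x1 x2].
  by rewrite !inE; case: (x \in D1) (D12 x) => //=; case: (x \in D2).
by move: (D12 x); rewrite x1 x2.
Qed.

Lemma fgraph_iso_on_star (D : pred T) z m : z \in D -> (forall y, y \in D -> f y = z) ->
  #|D| = m.+1 -> fgraph_iso_on D [:: (1%N, m)].
Proof.
move=> zD fz cD; pose E := enum [predD1 D & z].
have cE : size E = m.
  by rewrite -cardE; move: cD; rewrite (cardD1 z) zD add1n => [[]].
have inE_E y : y \in D -> y != z -> y \in E by rewrite mem_enum !inE => -> ->.
have ltE y : y \in D -> y != z -> (index y E < m)%N.
  by move=> yD yz; rewrite -cE index_mem inE_E.
exists (fun y => if y == z then (0%N, 0%N, m) else (0%N, 0%N, index y E)); split.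
- move=> y1 y2 h1 h2; case: eqP => [->|/eqP e1]; case: eqP => [->|/eqP e2] //.
  + by case=> e; move: (ltE _ h2 e2); rewrite -e ltnn.
  + by case=> e; move: (ltE _ h1 e1); rewrite e ltnn.
  + by case=> e; rewrite -(nth_index z (inE_E _ h1 e1)) e nth_index ?inE_E.
- by move=> y yD; case: eqP => [_|/eqP yz] /=; last rewrite ltnW ?ltE.
- move=> [[k i] j] /and3P []; rewrite ltnS leqn0 => /eqP -> /=.
  rewrite ltnS leqn0 => /eqP -> hj.
  case: (ltnP j m) => hjm; last first.
    by exists z => //; rewrite eqxx; congr (_, _, _); apply/eqP; rewrite eqn_leq hj hjm.
  have : nth z E j \in E by rewrite mem_nth ?cE.
  rewrite mem_enum !inE => /andP [nz hD]; exists (nth z E j) => //.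
  by rewrite (negbTE nz) index_uniq ?enum_uniq ?cE.
- by move=> y /fz ->.
- move=> y yD; rewrite (fz _ yD) eqxx /=.
  by case: eqP => [_|/eqP yz] /=; rewrite ?ltnn ?ltE.
Qed.

End FunctionalGraphs.

Lemma mord_spec (F : finFieldType) (g : F) : g != 0 ->
  [/\ (0 < mord g)%N, g ^+ mord g = 1 & forall i, (0 < i < mord g)%N -> g ^+ i != 1].
Proof.
move=> g0; have iter_mul i y : iter i (fun x => g * x) y = g ^+ i * y.
  by elim: i => [|i IH] /=; rewrite ?mul1r // IH exprS mulrA.
split; first exact: fingraph.order_gt0.
  by have := fingraph.iter_order (mulfI g0) 1; rewrite iter_mul mulr1.
move=> i /andP [i0 lt_i]; apply: contraTneq i0 => gi1.
have := @nth_uniq _ 1 (fingraph.orbit (fun x => g * x) 1) 0 i.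
rewrite size_orbit fingraph.order_gt0 lt_i => /(_ isT isT (fingraph.orbit_uniq _ _)).
rewrite /fingraph.orbit !nth_traject ?fingraph.order_gt0 //= iter_mul gi1 mulr1 eqxx.
by move/esym/eqP <-.
Qed.

Lemma fgraph_iso_on_mul (F : finFieldType) (h : F -> F) (D : pred F) (g : F) :
  g != 0 -> 0 \notin D -> {homo h : x / x \in D} -> (forall x, x \in D -> h x = g * x) ->
  fgraph_iso_on h D (nseq (#|D| %/ mord g) (mord g, 0%N)).
Proof.
move=> g0 D0 hD hg; have [ord_gt0 ord_id ord_min] := mord_spec g0.
have iter_h i x : x \in D -> iter i h x = g ^+ i * x.
  move=> xD; elim: i => [|i IH] /=; first by rewrite mul1r.
  by rewrite hg ?IH ?exprS ?mulrA // -IH iter_homo.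
apply: fgraph_iso_on_cycles => // [x xD|i x xD lt_i].
  by rewrite iter_h // ord_id mul1r.
have x0 : x != 0 by apply: contraNneq D0 => <-.
by rewrite iter_h // -{2}[x]mul1r (inj_eq (mulIf x0)) ord_min.
Qed.

(** * The quadratic extension F_(q^2) / F_q *)

Section QuadraticExtension.
Variables (L : finFieldType) (k : nat).
Hypotheses (k_gt0 : (0 < k)%N) (card_L : #|L| = ((2 ^ k) ^ 2)%N).
Local Notation q := (2 ^ k)%N.
Local Notation Fq := (@subFq L q).

Lemma pchar2_L : 2%N \in [pchar L].
Proof. by apply: (card_finPcharP (n := (k * 2)%N)); rewrite // card_L expnM. Qed.

Lemma expr2nD i (x y : L) : (x + y) ^+ (2 ^ i) = x ^+ (2 ^ i) + y ^+ (2 ^ i).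
Proof.
elim: i => [|i IH]; first by rewrite !expr1.
by rewrite expnSr !exprM IH sqrrD mulr2n (addrr_pchar2 pchar2_L) addr0.
Qed.

Lemma expr_qq (x : L) : x ^+ (q * q) = x.
Proof. by rewrite -[(q * q)%N]/(q ^ 2)%N -card_L expf_card. Qed.

Lemma q_gt1 : (1 < q)%N.
Proof. by rewrite -{1}(expn0 2) ltn_exp2l. Qed.

Lemma expr_q (x : L) : x ^+ q = x ^+ (q - 1) * x.
Proof. by rewrite -exprSr subn1 prednK // expn_gt0. Qed.

Lemma Fq_expr_qm1 (x : L) : x ^+ q = x -> x != 0 -> x ^+ (q - 1) = 1.
Proof. by move=> xq x0; apply: (mulIf x0); rewrite mul1r -expr_q. Qed.

Lemma Fq_inE (x : L) : (x \in Fq) = (x ^+ q == x).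
Proof. by rewrite unfold_in. Qed.

Lemma Fq0 : (0 : L) \in Fq.
Proof. by rewrite Fq_inE expr0n expn_eq0. Qed.

Lemma card_Fq_le : (#|Fq| <= q)%N.
Proof.
pose p : {poly L} := 'X^q - 'X.
have size_p : size p = q.+1.
  by rewrite size_polyDl ?size_polyXn // size_polyN size_polyX ltnS q_gt1.
have p_neq0 : p != 0 by rewrite -size_poly_eq0 size_p.
rewrite cardE -ltnS -size_p max_poly_roots ?enum_uniq //.
by apply/allP => x; rewrite mem_enum /root !hornerE Fq_inE subr_eq0.
Qed.

(* The powers g^((q+1) i), i < q - 1, of a generator g of L^* are q - 1
   distinct nonzero elements of F_q. *)
Lemma card_Fq_ge : (q <= #|Fq|)%N.
Proof.
have /cyclicP [g def_g] := field_unit_group_cyclic [set: {unit L}]%G.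
have ord_g : #[g]%g = (q * q).-1 by rewrite /order -def_g card_finField_unit card_L.
pose h (i : 'I_(q - 1)) : L := val (g ^+ ((q + 1) * i))%g.
have h_inj : injective h.
  move=> i j /val_inj /eqP; rewrite eq_expg_mod_order ord_g => /eqP e.
  have lt (m : 'I_(q - 1)) : ((q + 1) * m < (q * q).-1)%N.
    by have := ltn_ord m; have := q_gt1; nia.
  rewrite !modn_small ?lt // in e; apply/val_inj/eqP.
  by rewrite -(eqn_pmul2l (_ : 0 < q + 1)%N) ?e ?addn1.
have h_Fq i : h i \in [predD1 Fq & 0].
  rewrite !inE /h -unitfE (valP (g ^+ _)%g) Fq_inE expr_q /=.
  rewrite -val_unitX -expgM.
  have -> : ((q + 1) * i * (q - 1))%N = (#[g]%g * i)%N.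
    by rewrite ord_g; have := q_gt1; nia.
  by rewrite expgM expg_order expg1n mul1r.
have : (q - 1 <= #|[predD1 Fq & 0%R]|)%N.
  rewrite -[(q - 1)%N]card_ord -(card_image h_inj).
  by apply/subset_leq_card/subsetP => _ /imageP [i _ ->]; apply: h_Fq.
by rewrite [#|Fq|](cardD1 0) Fq0 leq_subLR.
Qed.

Lemma card_Fq : #|Fq| = q.
Proof. by apply/eqP; rewrite eqn_leq card_Fq_le card_Fq_ge. Qed.

Lemma card_Fq_neq0 : #|[predD1 Fq & 0]| = (q - 1)%N.
Proof. by have := cardD1 0 Fq; rewrite card_Fq Fq0 add1n => e; rewrite [in RHS]e subn1. Qed.

Definition scale_factor (c z : L) := (z ^+ (q - 1) - c) ^+ (q + 1).

Lemma scale_factor_Fq c z : scale_factor c z ^+ q = scale_factor c z.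
Proof.
by rewrite /scale_factor -exprM mulnDl mul1n exprD expr_qq addnC exprD expr1 mulrC.
Qed.

Lemma scale_factorZ c l z :
  l ^+ q = l -> l != 0 -> scale_factor c (l * z) = scale_factor c z.
Proof. by move=> lq l0; rewrite /scale_factor exprMn (Fq_expr_qm1 lq l0) mul1r. Qed.

Lemma scale_factor_eq0 c z : c ^+ q = c -> z != 0 -> scale_factor c z = 0 ->
  c = 1 /\ z ^+ q = z.
Proof.
move=> cq z0 /eqP; rewrite /scale_factor expf_eq0 addn1 /= subr_eq0 => /eqP zc.
have c2 : c ^+ 2 = 1.
  have : z ^+ ((q - 1) * (q + 1)) = 1.
    rewrite (_ : (q - 1) * (q + 1) = (q * q).-1)%N; last by have := q_gt1; nia.
    by apply: (mulIf z0); rewrite mul1r -exprSr prednK ?expr_qq // muln_gt0 expn_gt0.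
  by rewrite exprM zc exprD cq expr1 -expr2.
have c1 : c = 1.
  have : (c - 1) ^+ 2 == 0.
    rewrite (GRing.subr_pchar2 pchar2_L) -[2%N]/(2 ^ 1)%N expr2nD c2 expr1n.
    by rewrite (addrr_pchar2 pchar2_L).
  by rewrite expf_eq0 subr_eq0 => /eqP.
by split => //; rewrite expr_q zc c1 mul1r.
Qed.

Variables (a beta : L).
Hypotheses (tr_a : absTr k a = 1) (beta_root : beta ^+ 2 + beta + a = 0).

Lemma sqr_beta : beta ^+ 2 = beta + a.
Proof. by apply/eqP; rewrite -subr_eq0 (GRing.subr_pchar2 pchar2_L) addrA beta_root. Qed.

Lemma expr_beta_pow2 i : beta ^+ (2 ^ i) = beta + absTr i a.
Proof.
elim: i => [|i IH]; first by rewrite /absTr big_ord0 addr0.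
by rewrite expnS exprM sqr_beta expr2nD IH /absTr big_ord_recr addrA.
Qed.

Lemma expr_beta_q : beta ^+ q = beta + 1.
Proof. by rewrite expr_beta_pow2 tr_a. Qed.

Lemma line_gen_neq0 u v : u ^+ q = u -> v ^+ q = v -> (u, v) != (0, 0) ->
  u + v * beta != 0.
Proof.
move=> uq vq; apply: contraNneq => uvb0.
have [v0|v0] := eqVneq v 0; first by move: uvb0; rewrite v0 mul0r addr0 => ->.
have vb : v * beta = u.
  by rewrite -(GRing.oppr_pchar2 pchar2_L u); apply/eqP; rewrite -addr_eq0 addrC uvb0.
have : beta ^+ q == beta by rewrite -[beta](mulKf v0) vb exprMn exprVn uq vq.
by rewrite expr_beta_q -subr_eq0 addrC addKr oner_eq0.
Qed.

Lemma scale_factor_gfun c u v : u ^+ q = u -> v ^+ q = v -> c ^+ q = c ->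
  (u, v) != (0, 0) -> scale_factor c (u + v * beta) = gfun a c u v.
Proof.
move=> uq vq cq uv0; have z0 := line_gen_neq0 uq vq uv0.
set z := u + v * beta in z0 *.
have zq : z ^+ q = z + v by rewrite /z expr2nD exprMn uq vq expr_beta_q; ring.
have zv0 : z + v != 0 by rewrite -zq expf_neq0.
have zqm1 : z ^+ (q - 1) = (z + v) / z by rewrite -zq expr_q mulfK.
have zvq : ((z + v) / z - c) ^+ q = z / (z + v) - c.
  by rewrite !(GRing.subr_pchar2 pchar2_L) expr2nD expr_div_n cq -zq -exprM expr_qq.
have sf : scale_factor c z = (z / (z + v) - c) * ((z + v) / z - c).
  by rewrite /scale_factor zqm1 exprD zvq expr1.
(* the denominator of g is the norm z z^q = z (z + v) *)
have norm_z : z * (z + v) = u ^+ 2 + u * v + v ^+ 2 * a.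
  have -> : z * (z + v) = u ^+ 2 + u * v + v ^+ 2 * a + (u * v * beta) *+ 2.
    have -> : a = beta ^+ 2 + beta by rewrite sqr_beta addrAC (addrr_pchar2 pchar2_L) add0r.
    by rewrite /z; ring.
  by rewrite (mulrn_pchar pchar2_L) addr0.
have N0 : z * (z + v) != 0 by rewrite mulf_neq0.
have sfN : scale_factor c z * (z * (z + v)) = (c ^+ 2 + 1) * (z * (z + v)) + c * v ^+ 2.
  have -> : scale_factor c z * (z * (z + v))
            = (c ^+ 2 + 1) * (z * (z + v)) + c * v ^+ 2
              - (c * (z ^+ 2 + z * v + v ^+ 2)) *+ 2.
    by rewrite sf; field; rewrite z0 zv0.
  by rewrite (mulrn_pchar pchar2_L) subr0.
by rewrite /gfun -norm_z -(mulfK N0 (scale_factor c z)) sfN; field; rewrite z0 zv0.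
Qed.

Lemma linesetP u v x :
  reflect (exists2 l, l ^+ q = l & x = l * (u + v * beta)) (lineset q beta u v x).
Proof.
apply: (iffP existsP) => [[l /andP [lq /eqP ->]]|[l lq ->]].
  by exists l => //; apply/eqP; rewrite -Fq_inE.
by exists l; rewrite Fq_inE lq !eqxx.
Qed.

Lemma lineset10 x : lineset q beta 1 0 x = (x ^+ q == x).
Proof.
apply/linesetP/eqP => [[l lq ->]|xq]; first by rewrite mul0r addr0 mulr1.
by exists x => //; rewrite mul0r addr0 mulr1.
Qed.

Definition punctured_line (r : L * L) : pred L :=
  [pred x | lineset q beta r.1 r.2 x & x != 0].

Lemma card_punctured_line u v : u ^+ q = u -> v ^+ q = v -> (u, v) != (0, 0) ->
  #|punctured_line (u, v)| = (q - 1)%N.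
Proof.
move=> uq vq uv0; have z0 := line_gen_neq0 uq vq uv0.
rewrite -card_Fq_neq0 -[RHS](card_image (mulIf z0)); apply: eq_card => x.
rewrite !inE /=; apply/andP/imageP => [[/linesetP [l lq ->] x0]|[l]].
  exists l => //; rewrite !inE Fq_inE lq eqxx andbT.
  by apply: contraNneq x0 => ->; rewrite mul0r.
rewrite !inE Fq_inE => /andP [l0 /eqP lq] ->; split; last by rewrite mulf_neq0.
by apply/linesetP; exists l.
Qed.

Local Notation fc c := (fun x : L => x * scale_factor c x).

Lemma fgraph_iso_on_punctured_line c u v :
  u ^+ q = u -> v ^+ q = v -> (u, v) != (0, 0) -> c ^+ q = c ->
  scale_factor c (u + v * beta) != 0 ->
  fgraph_iso_on (fc c) (punctured_line (u, v))
    (copies_cycle ((q - 1) %/ mord (gfun a c u v)) (mord (gfun a c u v))).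
Proof.
move=> uq vq uv0 cq g0.
rewrite -scale_factor_gfun // -(card_punctured_line uq vq uv0).
set g := scale_factor c _ in g0 *.
have fc_line x : x \in punctured_line (u, v) -> fc c x = g * x.
  case/andP => /linesetP [l lq ->] x0.
  have l0 : l != 0 by apply: contraNneq x0 => ->; rewrite mul0r.
  by rewrite scale_factorZ // mulrC.
apply: fgraph_iso_on_mul => // [|x xPL]; first by rewrite !inE eqxx andbF.
rewrite fc_line //; case/andP: xPL => /linesetP [l lq ->] x0.
rewrite !inE mulf_neq0 // andbT; apply/linesetP; exists (g * l); last by rewrite mulrA.
by rewrite exprMn scale_factor_Fq lq.
Qed.

Lemma lineset_eq10 u v : u ^+ q = u -> v ^+ q = v -> (u, v) != (0, 0) ->
  [forall z, lineset q beta u v z == lineset q beta 1 0 z] =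
  ((u + v * beta) ^+ q == u + v * beta).
Proof.
move=> uq vq uv0; have w0 := line_gen_neq0 uq vq uv0.
set w := u + v * beta in w0 *.
apply/forallP/eqP => [/(_ w)|wq z]; rewrite lineset10.
  move=> /eqP h; apply/eqP; rewrite -h; apply/linesetP.
  by exists 1; rewrite ?expr1n ?mul1r.
apply/eqP; apply/idP/idP => [/linesetP [l lq ->]|/eqP zq]; first by rewrite exprMn lq wq.
by apply/linesetP; exists (z / w); rewrite ?expr_div_n ?zq ?wq ?divfK.
Qed.

Lemma punctured_line_Fq u v x : x \in punctured_line (u, v) ->
  (x ^+ q == x) = ((u + v * beta) ^+ q == u + v * beta).
Proof.
case/andP => /linesetP [l lq ->] x0.
have l0 : l != 0 by apply: contraNneq x0 => ->; rewrite mul0r.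
by rewrite exprMn lq (inj_eq (mulfI l0)).
Qed.

Variables (reps : seq (L * L)) (reps_P1 : P1_reps q beta reps).

Lemma reps_Fq r : r \in reps -> [/\ r.1 ^+ q = r.1, r.2 ^+ q = r.2 & r != (0, 0)].
Proof. by case/reps_P1.1; rewrite !Fq_inE => /eqP ? /eqP. Qed.

Lemma count_punctured_line x : x != 0 ->
  count (fun r => x \in punctured_line r) reps = 1%N.
Proof.
move=> x0; rewrite -(reps_P1.2 x x0); apply: eq_count => r.
by rewrite !inE x0 andbT.
Qed.

Lemma fgraph_iso_on_reps c (P : pred (L * L)) : c ^+ q = c ->
  (forall r, r \in reps -> P r -> scale_factor c (r.1 + r.2 * beta) != 0) ->
  fgraph_iso_on (fc c)
    [pred x | has (fun r => x \in punctured_line r) [seq r <- reps | P r]]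
   (flatten [seq copies_cycle ((q - 1) %/ mord (gfun a c r.1 r.2)) (mord (gfun a c r.1 r.2))
            | r <- reps & P r]).
Proof.
move=> cq sf0; apply: fgraph_iso_on_flatten => [[u v]|x].
  rewrite mem_filter => /andP [Pr r_reps]; have [uq vq uv0] := reps_Fq r_reps.
  exact: fgraph_iso_on_punctured_line (sf0 _ r_reps Pr).
rewrite count_filter; have [->|x0] := eqVneq x 0.
  by rewrite (eq_count (a2 := pred0)) ?count_pred0 // => r; rewrite /= !inE eqxx andbF.
by rewrite -(count_punctured_line x0) sub_count // => r /andP [].
Qed.

Lemma fgraph_iso_fc c : c ^+ q = c -> c != 0 -> c != 1 ->
  fgraph_iso (fc c)
    ((1%N, 0%N) :: flatten [seq copies_cycle ((q - 1) %/ mord (gfun a c r.1 r.2))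
                                             (mord (gfun a c r.1 r.2)) | r <- reps]).
Proof.
move=> cq c0 c1.
have sf0 r : r \in reps -> predT r -> scale_factor c (r.1 + r.2 * beta) != 0.
  move=> r_reps _; have [uq vq uv0] := reps_Fq r_reps.
  by apply: contra_neq c1 => /(scale_factor_eq0 cq (line_gen_neq0 uq vq uv0)) [].
have := fgraph_iso_on_reps cq sf0; rewrite filter_predT => iso_lines.
apply: (fgraph_iso_split (D1 := pred1 0) (s1 := [:: (1%N, 0%N)]) _ _ iso_lines) => [x|].
  rewrite !inE has_count; have [->|x0] := eqVneq x 0; last by rewrite count_punctured_line.
  by rewrite (eq_count (a2 := pred0)) ?count_pred0 // => r; rewrite /= !inE eqxx andbF.
apply: (fgraph_iso_on_star (z := 0)); rewrite ?inE ?card1 //.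
by move=> y /eqP ->; rewrite mul0r.
Qed.

Lemma fgraph_iso_f1 :
  fgraph_iso (fc 1)
    ((1%N, (q - 1)%N) ::
       flatten [seq copies_cycle ((q - 1) %/ mord (gfun a 1 r.1 r.2))
                                 (mord (gfun a 1 r.1 r.2))
               | r <- reps & ~~ [forall z : L,
                                   lineset q beta r.1 r.2 z == lineset q beta 1 0 z]]).
Proof.
set P := fun r : L * L => ~~ [forall z, _].
have P_Fq r : r \in reps -> P r = ((r.1 + r.2 * beta) ^+ q != r.1 + r.2 * beta).
  by case/reps_Fq => uq vq uv0; rewrite /P lineset_eq10.
have sf0 r : r \in reps -> P r -> scale_factor 1 (r.1 + r.2 * beta) != 0.
  move=> r_reps; have [uq vq uv0] := reps_Fq r_reps; rewrite P_Fq //.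
  by apply: contra_neq => /(scale_factor_eq0 (expr1n _ _) (line_gen_neq0 uq vq uv0)) [].
have iso_lines := fgraph_iso_on_reps (expr1n _ _) sf0.
apply: (fgraph_iso_split (D1 := Fq) (s1 := [:: (1%N, (q - 1)%N)]) _ _ iso_lines) => [x|].
  rewrite inE Fq_inE; have [->|x0] := eqVneq x 0.
    by rewrite expr0n expn_eq0 eqxx; apply/hasP => -[r _]; rewrite !inE eqxx andbF.
  have [r r_reps xr] : exists2 r, r \in reps & x \in punctured_line r.
    by apply/hasP; rewrite has_count count_punctured_line.
  have P_x r' : r' \in reps -> x \in punctured_line r' -> P r' = (x ^+ q != x).
    by case: r' => u v r'_reps xr'; rewrite P_Fq // /= -(punctured_line_Fq xr').
  suff -> : has (fun r => x \in punctured_line r) [seq r <- reps | P r] = (x ^+ q != x).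
    by case: (x ^+ q == x).
  apply/hasP/idP => [[r']|xq]; last by exists r; rewrite // mem_filter P_x ?xq.
  by rewrite mem_filter => /andP [Pr' r'_reps] xr'; rewrite -(P_x r').
apply: (fgraph_iso_on_star (z := 0)); rewrite ?Fq0 ?card_Fq ?subn1 ?prednK ?expn_gt0 //.
move=> y; rewrite Fq_inE => /eqP yq; have [->|y0] := eqVneq y 0; first by rewrite mul0r.
by rewrite /scale_factor Fq_expr_qm1 // subrr expr0n addn1 mulr0.
Qed.

End QuadraticExtension.

Theorem mainTheorem10 (L : finFieldType) (k : nat) (hk : (0 < k)%N)
  (hcard : #|L| = ((2 ^ k) ^ 2)%N) (a beta : L)
  (ha : a \in subFq (2 ^ k)) (htr : absTr k a = 1)
  (hbeta : beta ^+ 2 + beta + a = 0)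
  (reps : seq (L * L)) (hreps : P1_reps (2 ^ k) beta reps) :
  let q := (2 ^ k)%N in
  let f := fun c : L => fun x : L => x * (x ^+ (q - 1) - c) ^+ (q + 1) in
  (forall c : L, c \in subFq q -> c != 0 -> c != 1 ->
     fgraph_iso (f c)
       ((1%N, 0%N) :: flatten [seq copies_cycle ((q - 1) %/ mord (gfun a c r.1 r.2))
                                              (mord (gfun a c r.1 r.2)) | r <- reps]))
  /\
  fgraph_iso (f 1)
    ((1%N, (q - 1)%N) ::
       flatten [seq copies_cycle ((q - 1) %/ mord (gfun a 1 r.1 r.2))
                                 (mord (gfun a 1 r.1 r.2))
               | r <- reps & ~~ [forall z : L, lineset q beta r.1 r.2 z == lineset q beta 1 0 z]]).
Proof.
move=> q f; split => [c /eqP|].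
  exact: (fgraph_iso_fc hk hcard htr hbeta hreps (c := c)).
exact: (fgraph_iso_f1 hk hcard htr hbeta hreps).
Qed.
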